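(* Let $\ell$ be a positive integer and $n$ an integer such that $a:=n/\ell\in\mathbb Z$ and $n\ell+\ell^2>0$. For $u,v\in\mathbb C$, $\tau\in\mathbb H$, $n'\in\mathbb R$ and $\ell'\in\mathbb Z$ define $$\chi_{\mathsf A^{n,\ell}_{n',\ell'}}(u,v;\tau)=-i\,\frac{\theta_1(u;\tau)}{\eta(\tau)^3}\sum_{m\in\mathbb Z}\frac{(-1)^{k}e^{2\pi i v k}\,e^{2\pi i u(ak+n'+\frac12)}\,e^{\pi i\tau k(k(2a+1)+2n'+1)}}{1-e^{2\pi i(u+k\tau)}},\qquad k=m\ell+\ell',$$ for $u$ such that no denominator vanishes. Then, writing $y=e^{2\pi i v}$, $z=e^{2\pi i u}$, $$\chi_{\mathsf A^{n,\ell}_{n',\ell'}}(u+1,v;\tau)=e^{2\pi i(a\ell'+n')}\chi_{\mathsf A^{n,\ell}_{n',\ell'}}(u,v;\tau),\qquad \chi_{\mathsf A^{n,\ell}_{n',\ell'}}(u+\tau,v;\tau)=y^{-1}\chi_{\mathsf A^{n,\ell}_{n'-a-1,\ell'+1}}(u,v;\tau),$$ $$\chi_{\mathsf A^{n,\ell}_{n',\ell'}}(u,v+1;\tau)=\chi_{\mathsf A^{n,\ell}_{n',\ell'}}(u,v;\tau),\qquad \chi_{\mathsf A^{n,\ell}_{n',\ell'}}(u,v+\tau;\tau)=z^{-1}\chi_{\mathsf A^{n,\ell}_{n'+1,\ell'}}(u,v;\tau),$$ and more generally, for every $\alpha\in\mathbb R$, $$\chi_{\mathsf A^{n,\ell}_{n',\ell'}}(u,v+\alpha\tau;\tau)=e^{-2\pi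 i\alpha u}\,\chi_{\mathsf A^{n,\ell}_{n'+\alpha,\ell'}}(u,v;\tau).$$
   Context: $\theta_1(u;\tau)=-i\sum_{n\in\mathbb Z}(-1)^n e^{\pi i(n+\frac12)^2\tau+2\pi i u(n+\frac12)}$ and $\eta(\tau)=e^{\pi i\tau/12}\prod_{j\ge1}(1-e^{2\pi i j\tau})$. The function $\chi_{\mathsf A^{n,\ell}_{n',\ell'}}$ is the character of the atypical module $\mathsf A^{n,\ell}_{n',\ell'}$ of a W-superalgebra extending $\widehat{\mathfrak{gl}}(1|1)$; here it is taken as defined by the displayed formula. *)

From Stdlib Require Import Reals ZArith.
From Coquelicot Require Import Coquelicot.
Open Scope R_scope.

Definition cexp (z : C) : C :=
  (exp (Re z) * cos (Im z), exp (Re z) * sin (Im z)).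

Definition e2pi (z : C) : C := cexp (2 * PI * Ci * z)%C.

Definition clim (s : nat -> C) : C :=
  (real (Lim_seq (fun N => Re (s N))), real (Lim_seq (fun N => Im (s N)))).

(* bilateral sum over Z: limit of the symmetric partial sums
   sum_{m=-N}^{N} f m  (all series below converge absolutely) *)
Definition zsum (f : Z -> C) : C :=
  clim (fun N => sum_n (fun k => f (Z.of_nat k - Z.of_nat N)%Z) (2 * N)).

Fixpoint cprod_part (f : nat -> C) (N : nat) : C :=
  match N with
  | O => 1%C
  | S N' => (cprod_part f N' * f N)%C
  end.
Definition cprod1 (f : nat -> C) : C := clim (cprod_part f).

Definition sgnZ (k : Z) : C := RtoC (powerRZ (-1) k).

Definition theta1 (u tau : C) : C :=
  (- Ci * zsum (fun n =>
      sgnZ n * cexp (PI * Ci * RtoC ((IZR n + /2) ^ 2) * tau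
                     + 2 * PI * Ci * u * RtoC (IZR n + /2))))%C.

Definition eta (tau : C) : C :=
  (cexp (PI * Ci * tau / 12) *
   cprod1 (fun j => 1 - e2pi (RtoC (INR j) * tau)))%C.

Definition aZ (n l : Z) : R := IZR (n / l)%Z.

Definition kZ (l l' m : Z) : Z := (m * l + l')%Z.

Definition chiA (n l : Z) (n' : R) (l' : Z) (u v tau : C) : C :=
  let a := aZ n l in
  (- Ci * theta1 u tau / (eta tau ^ 3) *
   zsum (fun m =>
     let k := kZ l l' m in
     let kR := IZR k in
     sgnZ k * e2pi (v * RtoC kR) * e2pi (u * RtoC (a * kR + n' + /2))
       * cexp (PI * Ci * tau * RtoC (kR * (kR * (2 * a + 1) + 2 * n' + 1)))
       / (1 - e2pi (u + RtoC kR * tau))))%C.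

Definition admissible (l l' : Z) (u tau : C) : Prop :=
  forall m : Z, (1 - e2pi (u + RtoC (IZR (kZ l l' m)) * tau))%C <> 0%C.

(* Each of the four shifts multiplies every term of the series for [theta1] and
   for the character by one common factor, after reindexing [n -> n + 1] for
   theta and [k -> k + 1] (that is, [l' -> l' + 1]) or [n' -> n' + alpha] for the
   character; the identities then pass to the bilateral sums since all series
   converge geometrically.  The theta terms are Gaussian in [n]; the character
   terms are Gaussian in [k = m l + l'], with quadratic coefficient
   [pi Im tau (2a + 1) > 0] because [a >= 0], over denominators bounded below by
   [1/2] for all but finitely many [m].  A vanishing denominator gives the same
   junk inverse on both sides of a termwise identity. *)

From Stdlib Require Import Reals ZArith Lra Lia Psatz FunctionalExtensionality.
From Coquelicot Require Import Coquelicot.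
Open Scope R_scope.

Lemma C_ext (a b : C) : Re a = Re b -> Im a = Im b -> a = b.
Proof. destruct a, b; simpl; intros; subst; reflexivity. Qed.

Ltac C_ext_field := apply C_ext; unfold Re, Im; simpl; field.

Lemma cexp_add (a b : C) : cexp (a + b) = (cexp a * cexp b)%C.
Proof.
  unfold cexp; apply C_ext; unfold Re, Im; simpl;
    rewrite exp_plus, ?cos_plus, ?sin_plus; ring.
Qed.

Lemma Cmod_cexp (z : C) : Cmod (cexp z) = exp (Re z).
Proof.
  unfold cexp, Cmod, Re, Im; simpl.
  replace (_ * (_ * 1) + _ * (_ * 1))
    with (exp (fst z) ^ 2 * ((sin (snd z))² + (cos (snd z))²)) by (unfold Rsqr; ring).
  rewrite sin2_cos2, Rmult_1_r. apply sqrt_pow2. left; apply exp_pos.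
Qed.

Lemma cexp_neq0 (z : C) : cexp z <> 0%C.
Proof.
  intro H. apply (f_equal Cmod) in H. rewrite Cmod_cexp, Cmod_0 in H.
  pose proof (exp_pos (Re z)); lra.
Qed.

Lemma cexp_0 : cexp 0 = RtoC 1.
Proof. unfold cexp, Re, Im; simpl. rewrite exp_0, cos_0, sin_0. apply C_ext; simpl; ring. Qed.

Lemma cexp_opp (z : C) : cexp (- z) = (/ cexp z)%C.
Proof.
  assert (H : (cexp (- z) * cexp z)%C = RtoC 1).
  { rewrite <- cexp_add, <- cexp_0. f_equal. ring. }
  rewrite <- (Cmult_1_r (cexp (- z))), <- (Cinv_r (cexp z)) by apply cexp_neq0.
  rewrite Cmult_assoc, H. ring.
Qed.

Lemma cexp_Ci (y : R) : cexp (Ci * RtoC y) = (cos y, sin y).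
Proof.
  unfold cexp, Re, Im; simpl.
  replace (0 * y - 1 * 0) with 0 by ring. replace (0 * 0 + 1 * y) with y by ring.
  rewrite exp_0, !Rmult_1_l; reflexivity.
Qed.

Lemma cos_sin_2PI_IZR (k : Z) : cos (2 * IZR k * PI) = 1 /\ sin (2 * IZR k * PI) = 0.
Proof.
  assert (Hnat : forall j : nat, cos (2 * INR j * PI) = 1 /\ sin (2 * INR j * PI) = 0).
  { intro j. rewrite <- (Rplus_0_l (2 * INR j * PI)), cos_period, sin_period.
    split; [apply cos_0 | apply sin_0]. }
  destruct (Z_le_gt_dec 0 k) as [Hk | Hk].
  - rewrite <- (Z2Nat.id k Hk), <- INR_IZR_INZ. apply Hnat.
  - replace k with (- Z.of_nat (Z.to_nat (- k)))%Z by lia.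
    rewrite opp_IZR, <- INR_IZR_INZ.
    replace (2 * - INR (Z.to_nat (- k)) * PI) with (- (2 * INR (Z.to_nat (- k)) * PI)) by ring.
    rewrite cos_neg, sin_neg. destruct (Hnat (Z.to_nat (- k))) as [-> ->]. split; ring.
Qed.

Lemma cexp_2PI_IZR (k : Z) : cexp (2 * PI * Ci * RtoC (IZR k)) = RtoC 1.
Proof.
  replace (2 * PI * Ci * RtoC (IZR k))%C with (Ci * RtoC (2 * IZR k * PI))%C by C_ext_field.
  rewrite cexp_Ci. destruct (cos_sin_2PI_IZR k) as [-> ->]. reflexivity.
Qed.

Lemma cexp_PI : cexp (PI * Ci) = (- 1)%C.
Proof.
  replace (PI * Ci)%C with (Ci * RtoC PI)%C by C_ext_field.
  rewrite cexp_Ci, cos_PI, sin_PI. C_ext_field.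
Qed.

Lemma Cmod_e2pi (z : C) : Cmod (e2pi z) = exp (- 2 * PI * Im z).
Proof. unfold e2pi. rewrite Cmod_cexp. f_equal. unfold Re, Im; simpl; ring. Qed.

Lemma exp_pow (x : R) (j : nat) : exp x ^ j = exp (x * INR j).
Proof.
  induction j as [| j IH]; simpl pow. { rewrite Rmult_0_r, exp_0; reflexivity. }
  rewrite IH, <- exp_plus, S_INR. f_equal. ring.
Qed.

Lemma sgnZ_succ (k : Z) : sgnZ (k + 1) = (- sgnZ k)%C.
Proof. unfold sgnZ. rewrite powerRZ_add by lra. C_ext_field. Qed.

Lemma Cmod_sgnZ (k : Z) : Cmod (sgnZ k) = 1.
Proof.
  unfold sgnZ. rewrite Cmod_R. destruct k; simpl.
  - apply Rabs_R1.
  - apply pow_1_abs.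
  - rewrite Rabs_inv, pow_1_abs, Rinv_1; reflexivity.
Qed.

Definition sym_sum (f : Z -> C) (N : nat) : C :=
  sum_n (fun k => f (Z.of_nat k - Z.of_nat N)%Z) (2 * N).

Definition is_zsum (f : Z -> C) (L : C) : Prop :=
  filterlim (sym_sum f) eventually (locally L).

Lemma clim_unique (s : nat -> C) (L : C) :
  filterlim s eventually (locally L) -> clim s = L.
Proof.
  intro H. unfold clim.
  assert (HRe : is_lim_seq (fun N => Re (s N)) (Re L)).
  { apply filterlim_locally. intro eps.
    generalize (proj1 (filterlim_locally s L) H eps). apply filter_imp. intros x [Hx _]. exact Hx. }
  assert (HIm : is_lim_seq (fun N => Im (s N)) (Im L)).
  { apply filterlim_locally. intro eps.
    generalize (proj1 (filterlim_locally s L) H eps). apply filter_imp. intros x [_ Hx]. exact Hx. }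
  rewrite (is_lim_seq_unique _ _ HRe), (is_lim_seq_unique _ _ HIm). destruct L; reflexivity.
Qed.

Lemma zsum_unique (f : Z -> C) (L : C) : is_zsum f L -> zsum f = L.
Proof. apply clim_unique. Qed.

(* Pairing the terms [m] and [-m] turns the symmetric partial sums into the
   partial sums of an ordinary series. *)
Definition fold_at_zero (f : Z -> C) (j : nat) : C :=
  match j with
  | O => f 0%Z
  | S _ => (f (Z.of_nat j) + f (- Z.of_nat j)%Z)%C
  end.

Lemma sym_sum_fold (f : Z -> C) (N : nat) : sym_sum f N = sum_n (fold_at_zero f) N.
Proof.
  unfold sym_sum. induction N as [| N IH].
  - rewrite !sum_O. reflexivity.
  - rewrite sum_Sn, <- IH. unfold sum_n.
    replace (2 * S N)%nat with (S (S (2 * N))) by lia.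
    rewrite sum_Sn_m, <- sum_n_m_S, sum_n_Sm by lia.
    rewrite (sum_n_m_ext _ (fun k => f (Z.of_nat k - Z.of_nat N)%Z)) by (intro k; f_equal; lia).
    replace (Z.of_nat 0 - Z.of_nat (S N))%Z with (- Z.of_nat (S N))%Z by lia.
    replace (Z.of_nat (S (S (2 * N))) - Z.of_nat (S N))%Z with (Z.of_nat (S N)) by lia.
    change plus with Cplus.
    change (fold_at_zero f (S N)) with (f (Z.of_nat (S N)) + f (- Z.of_nat (S N))%Z)%C. ring.
Qed.

Definition geom_decay (f : Z -> C) : Prop :=
  exists (J : nat) (c r : R), 0 <= r < 1 /\
    forall j : nat, (J <= j)%nat ->
      Cmod (f (Z.of_nat j)) <= c * r ^ j /\ Cmod (f (- Z.of_nat j)%Z) <= c * r ^ j.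

Lemma ex_zsum_geom_decay (f : Z -> C) : geom_decay f -> exists L, is_zsum f L.
Proof.
  intros (J & c & r & Hr & Hb).
  assert (Hex : ex_series (V := C_NormedModule) (fold_at_zero f)).
  { apply (ex_series_incr_n _ (S J)).
    apply (ex_series_le (V := C_CompleteNormedModule) _ (fun k => (2 * c * r ^ S J) * r ^ k)).
    - intro k. change (Cmod (fold_at_zero f (S J + k)) <= 2 * c * r ^ S J * r ^ k).
      replace (S J + k)%nat with (S (J + k)) by lia.
      change (fold_at_zero f (S (J + k)))
        with (f (Z.of_nat (S (J + k))) + f (- Z.of_nat (S (J + k)))%Z)%C.
      destruct (Hb (S (J + k)) ltac:(lia)) as [Hpos Hneg].
      replace (2 * c * r ^ S J * r ^ k) with (c * r ^ S (J + k) + c * r ^ S (J + k))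
        by (rewrite <- Nat.add_succ_l, pow_add; ring).
      eapply Rle_trans; [apply Cmod_triangle | lra].
    - apply (ex_series_scal_l (V := R_NormedModule)), ex_series_geom.
      rewrite Rabs_pos_eq; lra. }
  destruct Hex as [L HL]. exists L.
  eapply filterlim_ext; [| exact HL]. intro N. symmetry. apply sym_sum_fold.
Qed.

Lemma is_zsum_scal_l (f : Z -> C) (L c : C) :
  is_zsum f L -> is_zsum (fun m => (c * f m)%C) (c * L)%C.
Proof.
  intro H. unfold is_zsum.
  eapply filterlim_ext. { intro N. unfold sym_sum. symmetry. apply (sum_n_mult_l (K := C_Ring)). }
  apply (filterlim_comp _ _ _ (sym_sum f) (fun z => scal (V := C_NormedModule) c z) _ (locally L)); [exact H|].
  apply (filterlim_scal_r (V := C_NormedModule)).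
Qed.

Lemma filterlim_geom_bound_0 (s : nat -> C) (J : nat) (c r : R) : 0 <= r < 1 ->
  (forall j, (J <= j)%nat -> Cmod (s j) <= c * r ^ j) ->
  filterlim s eventually (locally (RtoC 0)).
Proof.
  intros Hr Hb.
  assert (Hg : is_lim_seq (fun j => c * r ^ j) 0).
  { replace 0 with (c * 0) by ring. apply (is_lim_seq_scal_l _ c 0), is_lim_seq_geom.
    rewrite Rabs_pos_eq; lra. }
  apply filterlim_locally. intro eps.
  apply is_lim_seq_spec in Hg. destruct (Hg eps) as [N HN].
  exists (max N J). intros j Hj.
  apply (norm_compat1 (V := C_NormedModule)).
  change (Cmod (s j - RtoC 0)%C < eps). replace (s j - RtoC 0)%C with (s j) by ring.
  specialize (HN j ltac:(lia)). specialize (Hb j ltac:(lia)).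
  rewrite Rminus_0_r in HN. apply Rabs_lt_between in HN. lra.
Qed.

(* Shifting the index changes the symmetric partial sum by [f (N+1) - f (-N)],
   which tends to [0]. *)
Lemma is_zsum_shift (f : Z -> C) (L : C) :
  geom_decay f -> is_zsum f L -> is_zsum (fun m => f (m + 1)%Z) L.
Proof.
  intros (J & c & r & Hr & Hb) HL.
  assert (E : forall N, sym_sum (fun m => f (m + 1)%Z) N
                        = (sym_sum f N + (f (Z.of_nat (S N)) - f (- Z.of_nat N)%Z))%C).
  { intro N. unfold sym_sum, sum_n.
    assert (Hr1 : sum_n_m (fun k => f (Z.of_nat k - Z.of_nat N)%Z) 0 (S (2 * N))
               = (sum_n_m (fun k => f (Z.of_nat k - Z.of_nat N)%Z) 0 (2 * N)
                  + f (Z.of_nat (S N)))%C).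
    { rewrite sum_n_Sm by lia. change plus with Cplus. do 2 f_equal. lia. }
    assert (Hl1 : sum_n_m (fun k => f (Z.of_nat k - Z.of_nat N)%Z) 0 (S (2 * N))
               = (f (- Z.of_nat N)%Z
                  + sum_n_m (fun k => f (Z.of_nat k - Z.of_nat N + 1)%Z) 0 (2 * N))%C).
    { rewrite sum_Sn_m, <- sum_n_m_S by lia. change plus with Cplus.
      f_equal. apply sum_n_m_ext. intro k. f_equal. lia. }
    rewrite Hr1 in Hl1.
    revert Hl1. generalize (sum_n_m (fun k => f (Z.of_nat k - Z.of_nat N + 1)%Z) 0 (2 * N)).
    intros S1 HS1. change C in S1. replace S1 with (f (- Z.of_nat N)%Z + S1 - f (- Z.of_nat N)%Z)%C by ring.
    rewrite <- HS1. ring. }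
  unfold is_zsum. eapply filterlim_ext. { intro N. symmetry. apply E. }
  rewrite <- (Cplus_0_r L).
  apply (filterlim_comp_2 (G := locally L) (H := locally (RtoC 0)) _ _
           (fun x y => plus (G := C_AbelianMonoid) x y)); [exact HL | | apply (filterlim_plus (V := C_NormedModule))].
  apply (filterlim_geom_bound_0 _ J (c * r + c) r Hr).
  intros j Hj. eapply Rle_trans; [apply Cmod_triangle |].
  rewrite Cmod_opp. destruct (Hb (S j) ltac:(lia)) as [H1 _]. destruct (Hb j Hj) as [_ H2].
  simpl pow in H1. lra.
Qed.

Lemma zsum_scal_l (f : Z -> C) (c : C) :
  geom_decay f -> zsum (fun m => (c * f m)%C) = (c * zsum f)%C.
Proof.
  intro Hd. destruct (ex_zsum_geom_decay f Hd) as [L HL].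
  rewrite (zsum_unique _ _ HL). apply zsum_unique, is_zsum_scal_l, HL.
Qed.

Lemma zsum_shift_scal_l (f : Z -> C) (c : C) :
  geom_decay f -> zsum (fun m => (c * f (m + 1)%Z)%C) = (c * zsum f)%C.
Proof.
  intro Hd. destruct (ex_zsum_geom_decay f Hd) as [L HL].
  rewrite (zsum_unique _ _ HL). apply zsum_unique.
  apply (is_zsum_scal_l (fun m => f (m + 1)%Z)), is_zsum_shift; assumption.
Qed.

(* Complete the square, then use [x^2 >= 2 y - 1] for [y <= |x|]. *)
Lemma gaussian_exponent_le (A B x y : R) : 0 < A -> y <= Rabs x ->
  - A * x ^ 2 + B * x <= B ^ 2 / (2 * A) + A / 2 - A * y.
Proof.
  intros HA Hy.
  assert (Hsq : - A * x ^ 2 + B * x = - A / 2 * x ^ 2 - A / 2 * (x - B / A) ^ 2 + B ^ 2 / (2 * A))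
    by (field; lra).
  assert (Hx : 2 * y - 1 <= x ^ 2).
  { rewrite <- (pow2_abs x). pose proof (Rabs_pos x). pose proof (pow2_ge_0 (y - 1)).
    destruct (Rle_lt_dec y 0); nra. }
  assert (0 <= A / 2 * (x - B / A) ^ 2) by (apply Rmult_le_pos; [lra | apply pow2_ge_0]).
  rewrite Hsq. nra.
Qed.

Lemma INR_Zabs_nat (m : Z) : INR (Z.abs_nat m) = Rabs (IZR m).
Proof. rewrite INR_IZR_INZ, Zabs2Nat.id_abs, abs_IZR. reflexivity. Qed.

Lemma geom_decay_of_gaussian_bound (f : Z -> C) (A B c L : R) (J : nat) : 0 < A ->
  (forall m : Z, (J <= Z.abs_nat m)%nat -> exists x : R,
     Rabs (IZR m) - L <= Rabs x /\ Cmod (f m) <= c * exp (- A * x ^ 2 + B * x)) ->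
  geom_decay f.
Proof.
  intros HA Hf.
  exists J, (c * exp (B ^ 2 / (2 * A) + A / 2 + A * L)), (exp (- A)).
  split.
  { split; [left; apply exp_pos |]. rewrite <- exp_0. apply exp_increasing. lra. }
  assert (Hm : forall m : Z, (J <= Z.abs_nat m)%nat ->
            Cmod (f m) <= c * exp (B ^ 2 / (2 * A) + A / 2 + A * L) * exp (- A) ^ Z.abs_nat m).
  { intros m Hjm. destruct (Hf m Hjm) as (x & Hx & Hbound).
    assert (Hc : 0 <= c).
    { pose proof (Cmod_ge_0 (f m)). pose proof (exp_pos (- A * x ^ 2 + B * x)).
      destruct (Rle_lt_dec 0 c); nra. }
    rewrite exp_pow, Rmult_assoc, <- exp_plus, INR_Zabs_nat.
    eapply Rle_trans; [exact Hbound |]. apply Rmult_le_compat_l; [exact Hc |].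
    destruct (gaussian_exponent_le A B x (Rabs (IZR m) - L) HA Hx) as [Hlt | Heq].
    - left. apply exp_increasing. lra.
    - right. f_equal. lra. }
  intros j Hj. split.
  - replace j with (Z.abs_nat (Z.of_nat j)) at 2 by lia. apply Hm. lia.
  - replace j with (Z.abs_nat (- Z.of_nat j)) at 2 by lia. apply Hm. lia.
Qed.

Lemma Cmod_1_sub_ge_half (w : C) : Cmod w <= / 2 \/ 3 / 2 <= Cmod w -> / 2 <= Cmod (1 - w).
Proof.
  intro Hw.
  assert (H1 : Cmod (RtoC 1) <= Cmod (1 - w) + Cmod w).
  { replace (RtoC 1) with ((1 - w) + w)%C at 1 by ring. apply Cmod_triangle. }
  assert (H2 : Cmod w <= Cmod (1 - w) + Cmod (RtoC 1)).
  { replace w with (- (1 - w) + 1)%C at 1 by ring.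
    eapply Rle_trans; [apply Cmod_triangle | rewrite Cmod_opp; lra]. }
  rewrite Cmod_1 in H1, H2. lra.
Qed.

Lemma Cmod_1_sub_e2pi_ge_half (z : C) : 1 <= Rabs (Im z) -> / 2 <= Cmod (1 - e2pi z).
Proof.
  intro Hz. apply Cmod_1_sub_ge_half. rewrite Cmod_e2pi. pose proof PI2_1.
  destruct (Rle_lt_dec 0 (Im z)) as [Hy | Hy].
  - rewrite Rabs_pos_eq in Hz by exact Hy. left.
    replace (- 2 * PI * Im z) with (- (2 * PI * Im z)) by ring. rewrite exp_Ropp.
    apply Rinv_le_contravar; [lra |].
    pose proof (exp_ineq1_le (2 * PI * Im z)). nra.
  - rewrite Rabs_left in Hz by exact Hy. right.
    pose proof (exp_ineq1_le (- 2 * PI * Im z)). nra.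
Qed.

Definition theta1_term (u tau : C) (n : Z) : C :=
  (sgnZ n * cexp (PI * Ci * RtoC ((IZR n + /2) ^ 2) * tau
                  + 2 * PI * Ci * u * RtoC (IZR n + /2)))%C.

Lemma theta1_zsum (u tau : C) : theta1 u tau = (- Ci * zsum (theta1_term u tau))%C.
Proof. reflexivity. Qed.

Lemma geom_decay_theta1_term (u tau : C) : 0 < Im tau -> geom_decay (theta1_term u tau).
Proof.
  intro Ht. pose proof PI_RGT_0.
  apply (geom_decay_of_gaussian_bound _ (PI * Im tau) (- 2 * PI * Im u) 1 (/ 2) 0); [nra |].
  intros m _. exists (IZR m + / 2). split.
  - replace (IZR m + / 2) with (IZR m - - / 2) by ring.
    eapply Rle_trans; [| apply Rabs_triang_inv]. rewrite Rabs_Ropp, (Rabs_pos_eq (/ 2)) by lra. lra.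
  - unfold theta1_term. rewrite Cmod_mult, Cmod_sgnZ, Cmod_cexp, !Rmult_1_l.
    right. f_equal. unfold Re, Im; simpl; ring.
Qed.

Definition chiA_term (n l : Z) (n' : R) (l' : Z) (u v tau : C) (m : Z) : C :=
  let a := aZ n l in
  let kR := IZR (kZ l l' m) in
  (sgnZ (kZ l l' m) * e2pi (v * RtoC kR) * e2pi (u * RtoC (a * kR + n' + /2))
     * cexp (PI * Ci * tau * RtoC (kR * (kR * (2 * a + 1) + 2 * n' + 1)))
     / (1 - e2pi (u + RtoC kR * tau)))%C.

Lemma chiA_zsum (n l : Z) (n' : R) (l' : Z) (u v tau : C) :
  chiA n l n' l' u v tau
  = (- Ci * theta1 u tau / eta tau ^ 3 * zsum (chiA_term n l n' l' u v tau))%C.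
Proof. reflexivity. Qed.

Lemma Rabs_kZ_ge (l l' m : Z) : (0 < l)%Z ->
  Rabs (IZR m) - Rabs (IZR l') <= Rabs (IZR (kZ l l' m)).
Proof.
  intro Hl. unfold kZ. rewrite plus_IZR, mult_IZR.
  assert (Hml : Rabs (IZR m) <= Rabs (IZR m * IZR l)).
  { rewrite Rabs_mult, (Rabs_pos_eq (IZR l)) by (apply IZR_le; lia).
    pose proof (Rabs_pos (IZR m)). assert (1 <= IZR l) by (apply IZR_le; lia). nra. }
  replace (IZR m * IZR l + IZR l') with (IZR m * IZR l - - IZR l') by ring.
  pose proof (Rabs_triang_inv (IZR m * IZR l) (- IZR l')). rewrite Rabs_Ropp in *. lra.
Qed.

Lemma geom_decay_chiA_term (n l : Z) (n' : R) (l' : Z) (u v tau : C) :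
  (0 < l)%Z -> 0 < 2 * aZ n l + 1 -> 0 < Im tau -> geom_decay (chiA_term n l n' l' u v tau).
Proof.
  intros Hl Ha Ht. pose proof PI_RGT_0.
  set (a := aZ n l). set (t := Im tau).
  set (D := - 2 * PI * Im u * (n' + / 2)).
  (* For [|m| >= J] we get [|Im (u + k tau)| >= 1], so the denominator is at least [1/2]. *)
  destruct (INR_archimed 1 (Rabs (IZR l') + (Rabs (Im u) + 1) / t) ltac:(lra)) as [J HJ].
  rewrite Rmult_1_r in HJ.
  apply (geom_decay_of_gaussian_bound _ (PI * t * (2 * a + 1))
           (- (2 * PI * Im v + 2 * PI * a * Im u + PI * t * (2 * n' + 1))) (2 * exp D)
           (Rabs (IZR l')) J); [unfold a, t; apply Rmult_lt_0_compat; nra |].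
  intros m Hm. apply le_INR in Hm. rewrite INR_Zabs_nat in Hm.
  pose proof (Rabs_kZ_ge l l' m Hl) as Hk.
  set (x := IZR (kZ l l' m)) in *. exists x. split; [exact Hk |].
  assert (Hden : / 2 <= Cmod (1 - e2pi (u + RtoC x * tau))).
  { apply Cmod_1_sub_e2pi_ge_half.
    replace (Im (u + RtoC x * tau)) with (x * t - - Im u) by (unfold t, Re, Im; simpl; ring).
    assert (Hx : (Rabs (Im u) + 1) / t <= Rabs x) by lra.
    apply Rle_div_l in Hx; [| exact Ht].
    pose proof (Rabs_triang_inv (x * t) (- Im u)) as Htri.
    rewrite Rabs_Ropp, Rabs_mult, (Rabs_pos_eq t (Rlt_le _ _ Ht)) in Htri. lra. }
  unfold chiA_term. fold a x.
  rewrite Cmod_div by (intro H0; rewrite H0, Cmod_0 in Hden; lra).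
  rewrite !Cmod_mult, Cmod_sgnZ, !Cmod_e2pi, Cmod_cexp, Rmult_1_l, <- !exp_plus.
  match goal with |- exp ?P / _ <= _ => replace P with (D + (- (PI * t * (2 * a + 1)) * x ^ 2
           + - (2 * PI * Im v + 2 * PI * a * Im u + PI * t * (2 * n' + 1)) * x))
      by (unfold D, t, Re, Im; simpl; ring) end.
  rewrite exp_plus. set (E := exp D * exp _).
  assert (0 < E) by (apply Rmult_lt_0_compat; apply exp_pos).
  unfold Rdiv. replace (2 * exp D * exp _) with (E * 2) by (unfold E; ring).
  apply Rmult_le_compat_l; [lra |].
  rewrite <- (Rinv_inv 2). apply Rinv_le_contravar; lra.
Qed.

Definition appell_term (s E F : C) : C := (s * cexp E / (1 - cexp F))%C.

Lemma appell_term_shift (s1 s2 c X E1 E2 F1 F2 : C) (p q : Z) :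
  s1 = (c * s2)%C ->
  E1 = (X + 2 * PI * Ci * RtoC (IZR p) + E2)%C ->
  F1 = (F2 + 2 * PI * Ci * RtoC (IZR q))%C ->
  appell_term s1 E1 F1 = (c * cexp X * appell_term s2 E2 F2)%C.
Proof.
  intros -> -> ->. unfold appell_term.
  rewrite !cexp_add, !cexp_2PI_IZR, !Cmult_1_r. unfold Cdiv. ring.
Qed.

Lemma appell_term_period (s E1 E2 F1 F2 : C) (p q : Z) :
  E1 = (E2 + 2 * PI * Ci * RtoC (IZR p))%C ->
  F1 = (F2 + 2 * PI * Ci * RtoC (IZR q))%C ->
  appell_term s E1 F1 = appell_term s E2 F2.
Proof.
  intros HE HF.
  rewrite (appell_term_shift s s 1 0 E1 E2 F1 F2 p q), cexp_0;
    [ring | ring | rewrite HE; ring | exact HF].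
Qed.

Lemma chiA_term_appell (n l : Z) (n' : R) (l' : Z) (u v tau : C) (m : Z) :
  let a := aZ n l in
  let kR := IZR (kZ l l' m) in
  chiA_term n l n' l' u v tau m
  = appell_term (sgnZ (kZ l l' m))
      (2 * PI * Ci * (v * RtoC kR) + 2 * PI * Ci * (u * RtoC (a * kR + n' + /2))
       + PI * Ci * tau * RtoC (kR * (kR * (2 * a + 1) + 2 * n' + 1)))
      (2 * PI * Ci * (u + RtoC kR * tau)).
Proof. unfold chiA_term, appell_term, e2pi. cbv zeta. rewrite !cexp_add. unfold Cdiv. ring. Qed.

Lemma chiA_term_add1_u (n l : Z) (n' : R) (l' : Z) (u v tau : C) (m : Z) :
  chiA_term n l n' l' (u + 1) v tau m
  = (cexp (2 * PI * Ci * RtoC (aZ n l * IZR l' + n') + PI * Ci)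
     * chiA_term n l n' l' u v tau m)%C.
Proof.
  rewrite !chiA_term_appell. rewrite <- (Cmult_1_l (cexp _)).
  apply (appell_term_shift _ _ _ _ _ _ _ _ (n / l * m * l) 1).
  - ring.
  - unfold aZ, kZ. rewrite plus_IZR, !mult_IZR. C_ext_field.
  - C_ext_field.
Qed.


Lemma chiA_term_add_tau_u (n l : Z) (n' : R) (l' : Z) (u v tau : C) (m : Z) :
  chiA_term n l n' l' (u + tau) v tau m
  = (- cexp (- (2 * PI * Ci * v) + 2 * PI * Ci * u + PI * Ci * tau)
     * chiA_term n l (n' - aZ n l - 1) (l' + 1) u v tau m)%C.
Proof.
  rewrite !chiA_term_appell.
  replace (kZ l (l' + 1) m) with (kZ l l' m + 1)%Z by (unfold kZ; ring).
  rewrite sgnZ_succ, plus_IZR.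
  match goal with |- _ = (- ?w * ?t)%C => replace (- w * t)%C with (- 1 * w * t)%C by ring end.
  apply (appell_term_shift _ _ _ _ _ _ _ _ 0 0); C_ext_field.
Qed.

Lemma chiA_term_add1_v (n l : Z) (n' : R) (l' : Z) (u v tau : C) (m : Z) :
  chiA_term n l n' l' u (v + 1) tau m = chiA_term n l n' l' u v tau m.
Proof.
  rewrite !chiA_term_appell. apply (appell_term_period _ _ _ _ _ (kZ l l' m) 0); C_ext_field.
Qed.

Lemma chiA_term_add_mul_tau_v (n l : Z) (n' : R) (l' : Z) (u v tau : C) (alpha : R) (m : Z) :
  chiA_term n l n' l' u (v + RtoC alpha * tau) tau m
  = (cexp (- (2 * PI * Ci * RtoC alpha * u)) * chiA_term n l (n' + alpha) l' u v tau m)%C.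
Proof.
  rewrite !chiA_term_appell, <- (Cmult_1_l (cexp _)).
  apply (appell_term_shift _ _ _ _ _ _ _ _ 0 0); C_ext_field.
Qed.

Lemma theta1_term_add1 (u tau : C) (n : Z) :
  theta1_term (u + 1) tau n = (- theta1_term u tau n)%C.
Proof.
  unfold theta1_term.
  match goal with |- (_ * cexp ?P1 = - (_ * cexp ?P2))%C =>
    replace P1 with (PI * Ci + 2 * PI * Ci * RtoC (IZR n) + P2)%C by C_ext_field end.
  rewrite !cexp_add, cexp_PI, cexp_2PI_IZR. C_ext_field.
Qed.

Lemma theta1_term_add_tau (u tau : C) (n : Z) :
  theta1_term (u + tau) tau n
  = (- cexp (- (PI * Ci * tau) - 2 * PI * Ci * u) * theta1_term u tau (n + 1))%C.
Proof.
  unfold theta1_term. rewrite plus_IZR, sgnZ_succ.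
  match goal with |- (_ * cexp ?P1 = - cexp ?X * (_ * cexp ?P2))%C =>
    replace P1 with (X + P2)%C by C_ext_field end.
  rewrite cexp_add. ring.
Qed.

Lemma theta1_add1 (u tau : C) : 0 < Im tau -> theta1 (u + 1) tau = (- theta1 u tau)%C.
Proof.
  intro Ht. rewrite !theta1_zsum.
  transitivity (- Ci * zsum (fun n => - 1 * theta1_term u tau n))%C.
  - do 2 f_equal. extensionality k. rewrite theta1_term_add1. ring.
  - rewrite zsum_scal_l by (apply geom_decay_theta1_term, Ht). ring.
Qed.

Lemma theta1_add_tau (u tau : C) : 0 < Im tau ->
  theta1 (u + tau) tau = (- cexp (- (PI * Ci * tau) - 2 * PI * Ci * u) * theta1 u tau)%C.
Proof.
  intro Ht. rewrite !theta1_zsum, (functional_extensionality _ _ (theta1_term_add_tau u tau)).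
  rewrite zsum_shift_scal_l by (apply geom_decay_theta1_term, Ht). ring.
Qed.

Section Character.

Variables (n l l' : Z) (u v tau : C).
Hypotheses (hl : (0 < l)%Z) (ha : 0 < 2 * aZ n l + 1) (htau : 0 < Im tau).

Lemma chiA_add1_u (n' : R) :
  chiA n l n' l' (u + 1) v tau = (e2pi (RtoC (aZ n l * IZR l' + n')) * chiA n l n' l' u v tau)%C.
Proof.
  rewrite !chiA_zsum, theta1_add1 by exact htau.
  rewrite (functional_extensionality _ _ (chiA_term_add1_u n l n' l' u v tau)).
  rewrite zsum_scal_l by (apply geom_decay_chiA_term; assumption).
  rewrite cexp_add, cexp_PI. unfold e2pi, Cdiv. ring.
Qed.

Lemma chiA_add_tau_u (n' : R) :
  chiA n l n' l' (u + tau) v tau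
  = (/ e2pi v * chiA n l (n' - aZ n l - 1) (l' + 1) u v tau)%C.
Proof.
  rewrite !chiA_zsum, theta1_add_tau by exact htau.
  rewrite (functional_extensionality _ _ (chiA_term_add_tau_u n l n' l' u v tau)).
  rewrite zsum_scal_l by (apply geom_decay_chiA_term; assumption).
  assert (Hy : (/ e2pi v)%C
               = (cexp (- (PI * Ci * tau) - 2 * PI * Ci * u)
                  * cexp (- (2 * PI * Ci * v) + 2 * PI * Ci * u + PI * Ci * tau))%C).
  { unfold e2pi. rewrite <- cexp_opp, <- cexp_add. f_equal. ring. }
  rewrite Hy. unfold Cdiv. ring.
Qed.

Lemma chiA_add1_v (n' : R) : chiA n l n' l' u (v + 1) tau = chiA n l n' l' u v tau.
Proof.
  rewrite !chiA_zsum, (functional_extensionality _ _ (chiA_term_add1_v n l n' l' u v tau)).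
  reflexivity.
Qed.

Lemma chiA_add_mul_tau_v (n' alpha : R) :
  chiA n l n' l' u (v + RtoC alpha * tau) tau
  = (cexp (- (2 * PI * Ci * RtoC alpha * u)) * chiA n l (n' + alpha) l' u v tau)%C.
Proof.
  rewrite !chiA_zsum, (functional_extensionality _ _ (chiA_term_add_mul_tau_v n l n' l' u v tau alpha)).
  rewrite zsum_scal_l by (apply geom_decay_chiA_term; assumption).
  unfold Cdiv. ring.
Qed.

End Character.

Lemma aZ_nonneg (n l : Z) : (0 < l)%Z -> (n mod l = 0)%Z -> (0 < n * l + l * l)%Z -> 0 <= aZ n l.
Proof.
  intros Hl Hm Hp. unfold aZ. apply IZR_le.
  assert (Hn : n = (l * (n / l))%Z) by (apply Z.div_exact; lia).
  rewrite Hn in Hp. nia.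
Qed.

Theorem mainTheorem3 (n l : Z) (hl : (0 < l)%Z) (hdiv : (n mod l = 0)%Z)
    (hpos : (0 < n * l + l * l)%Z) (n' : R) (l' : Z) (u v tau : C)
    (htau : 0 < Im tau) :
  let a := aZ n l in
  let y := e2pi v in
  let z := e2pi u in
  (admissible l l' u tau -> admissible l l' (u + 1)%C tau ->
     chiA n l n' l' (u + 1)%C v tau
     = (e2pi (RtoC (a * IZR l' + n')) * chiA n l n' l' u v tau)%C) /\
  (admissible l l' (u + tau)%C tau -> admissible l (l' + 1)%Z u tau ->
     chiA n l n' l' (u + tau)%C v tau
     = (/ y * chiA n l (n' - a - 1) (l' + 1)%Z u v tau)%C) /\
  (admissible l l' u tau ->
     chiA n l n' l' u (v + 1)%C tau = chiA n l n' l' u v tau) /\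
  (admissible l l' u tau ->
     chiA n l n' l' u (v + tau)%C tau = (/ z * chiA n l (n' + 1) l' u v tau)%C) /\
  (forall alpha : R, admissible l l' u tau ->
     chiA n l n' l' u (v + RtoC alpha * tau)%C tau
     = (cexp (- (2 * PI * Ci * RtoC alpha * u)) * chiA n l (n' + alpha) l' u v tau)%C).
Proof.
  intros a y z.
  assert (ha : 0 < 2 * aZ n l + 1) by (pose proof (aZ_nonneg n l hl hdiv hpos); lra).
  split; [| split; [| split; [| split]]].
  - intros _ _. apply chiA_add1_u; assumption.
  - intros _ _. apply chiA_add_tau_u; assumption.
  - intros _. apply chiA_add1_v.
  - intros _. replace (v + tau)%C with (v + RtoC 1 * tau)%C by ring.
    rewrite chiA_add_mul_tau_v by assumption.
    unfold z, e2pi. rewrite <- cexp_opp. do 3 f_equal. ring.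
  - intros alpha _. apply chiA_add_mul_tau_v; assumption.
Qed.
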